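(* Assume the symmetric setting $g_1=g_2=g>0$, $m_1=m_2=m>0$, $\alpha=\lambda=1$, $\eta^A=\eta=-\eta^a>0$, and assume $$g(\eta^2+1)<1\quad\text{or}\quad m<\frac{2g^2\eta^2}{g(\eta^2+1)-1}-g(\eta^2+1)+1 .$$ Then there exists a unique $\bar Y^*=(N_1^{a,*},N_2^{a,*},N_1^{A,*},N_2^{A,*},\delta^*,\delta^{A,*},\delta^{a,*})\in(0,\infty)^4\times\mathbb{R}^3$ with $G(\bar Y^*,0)=0$. Moreover $F(\bar Y^* )=0$, so that $(\bar Y^*,Z^*=0)$ is a stationary point of the limit system $G(\bar Y,Z)=0$, $\frac{dZ}{dt}=-2gZ+F(\bar Y)$; and it satisfies $N_1^{a,*}=N_2^{A,*}$, $N_2^{a,*}=N_1^{A,*}$ and $\delta^{A,*}=\delta^{a,*}$.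
   Context: Fast variable $\bar Y=(N_1^a,N_2^a,N_1^A,N_2^A,\delta,\delta^A,\delta^a)$, where $N_i^A,N_i^a$ are allelic subpopulation sizes in patch $i\in\{1,2\}$. Notation: $p_i=\frac{N_i^A}{N_i^A+N_i^a}$, $q_i=1-p_i$, $R^A=\frac{mN_2^A}{N_1^A}$, $S^A=\frac{mN_1^A}{N_2^A}$, $R^a=\frac{mN_2^a}{N_1^a}$, $S^a=\frac{mN_1^a}{N_2^a}$. With $\eta^A=\eta$, $\eta^a=-\eta$, the map $G$ has components: for $i\in\{1,2\}$, $j=3-i$, $\kappa\in\{A,a\}$, $G_{N_i^\kappa}=N_i^\kappa-(N_i^A+N_i^a)N_i^\kappa-g\big(Z+\eta^\kappa-(-1)^i\big)^2N_i^\kappa+m(N_j^\kappa-N_i^\kappa)$; $G_\delta=-\frac{\delta}{2}-2g\eta+\frac{\delta^A}{2}(R^A-S^A)-\frac{\delta^a}{2}(R^a-S^a)$; $G_{\delta^A}=2g+\frac{\delta}{2}(q_1-q_2)-\delta^A(R^A+S^A)+\frac{\delta^a-\delta^A}{4}(q_1+q_2)$; $G_{\delta^a}=2g+\frac{\delta}{2}(p_2-p_1)-\delta^a(R^a+S^a)+\frac{\delta^A-\delta^a}{4}(p_1+p_2)$. The map $F$ is $F(\bar Y)=\frac{\delta}{2}(p_1+p_2-1)+\frac{\delta^a}{2}(R^a-S^a)+\frac{\delta^A}{2}(R^A-S^A)+\frac{\delta^A-\delta^a}{4}(p_2-p_1)$. *)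

From HB Require Import structures.
From mathcomp Require Import all_boot all_order all_algebra.
From mathcomp Require Import reals.
Set Implicit Arguments. Unset Strict Implicit. Unset Printing Implicit Defensive.
Import Order.TTheory GRing.Theory Num.Theory.
Local Open Scope ring_scope.

Record fastvar (R : Type) := FastVar {
  Na1 : R; Na2 : R; NA1 : R; NA2 : R; dl : R; dlA : R; dla : R }.

Section Defs.
Variable R : realType.
(* parameters: g (selection), m (migration), eta (eta^A = eta, eta^a = -eta) *)
Variables (g m eta : R).

Definition p1 (Y : fastvar R) := NA1 Y / (NA1 Y + Na1 Y).
Definition p2 (Y : fastvar R) := NA2 Y / (NA2 Y + Na2 Y).
Definition q1 Y := 1 - p1 Y.
Definition q2 Y := 1 - p2 Y.
Definition RA (Y : fastvar R) := m * NA2 Y / NA1 Y.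
Definition SA (Y : fastvar R) := m * NA1 Y / NA2 Y.
Definition Ra (Y : fastvar R) := m * Na2 Y / Na1 Y.
Definition Sa (Y : fastvar R) := m * Na1 Y / Na2 Y.

(* G_{N_i^kappa} with i in {1,2}, j = 3 - i, (-1)^1 = -1, (-1)^2 = 1 *)
Definition G_Na1 (Y : fastvar R) (Z : R) :=
  Na1 Y - (NA1 Y + Na1 Y) * Na1 Y - g * (Z - eta + 1) ^+ 2 * Na1 Y
  + m * (Na2 Y - Na1 Y).
Definition G_Na2 (Y : fastvar R) (Z : R) :=
  Na2 Y - (NA2 Y + Na2 Y) * Na2 Y - g * (Z - eta - 1) ^+ 2 * Na2 Y
  + m * (Na1 Y - Na2 Y).
Definition G_NA1 (Y : fastvar R) (Z : R) :=
  NA1 Y - (NA1 Y + Na1 Y) * NA1 Y - g * (Z + eta + 1) ^+ 2 * NA1 Y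
  + m * (NA2 Y - NA1 Y).
Definition G_NA2 (Y : fastvar R) (Z : R) :=
  NA2 Y - (NA2 Y + Na2 Y) * NA2 Y - g * (Z + eta - 1) ^+ 2 * NA2 Y
  + m * (NA1 Y - NA2 Y).
Definition G_dl (Y : fastvar R) :=
  - dl Y / 2 - 2 * g * eta + dlA Y / 2 * (RA Y - SA Y) - dla Y / 2 * (Ra Y - Sa Y).
Definition G_dlA (Y : fastvar R) :=
  2 * g + dl Y / 2 * (q1 Y - q2 Y) - dlA Y * (RA Y + SA Y)
  + (dla Y - dlA Y) / 4 * (q1 Y + q2 Y).
Definition G_dla (Y : fastvar R) :=
  2 * g + dl Y / 2 * (p2 Y - p1 Y) - dla Y * (Ra Y + Sa Y)
  + (dlA Y - dla Y) / 4 * (p1 Y + p2 Y).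

Definition G_zero (Y : fastvar R) (Z : R) : Prop :=
  [/\ G_Na1 Y Z = 0, G_Na2 Y Z = 0, G_NA1 Y Z = 0 & G_NA2 Y Z = 0] /\
  [/\ G_dl Y = 0, G_dlA Y = 0 & G_dla Y = 0].

Definition F (Y : fastvar R) : R :=
  dl Y / 2 * (p1 Y + p2 Y - 1) + dla Y / 2 * (Ra Y - Sa Y)
  + dlA Y / 2 * (RA Y - SA Y) + (dlA Y - dla Y) / 4 * (p2 Y - p1 Y).

Definition admissible (Y : fastvar R) : Prop :=
  [/\ 0 < Na1 Y, 0 < Na2 Y, 0 < NA1 Y & 0 < NA2 Y].

Definition stationary (Y : fastvar R) (Z : R) : Prop :=
  G_zero Y Z /\ - 2 * g * Z + F Y = 0.
End Defs.

From HB Require Import structures.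
From mathcomp Require Import all_boot all_order all_algebra.
From mathcomp Require Import reals ring lra.
Set Implicit Arguments. Unset Strict Implicit. Unset Printing Implicit Defensive.
Import Order.TTheory GRing.Theory Num.Theory.
Local Open Scope ring_scope.

(* At Z = 0, an allele in the patch whose optimum is nearer to its trait value
   suffers selection c = g(1-eta)^2, in the other patch d = g(1+eta)^2.
   Multiplying the two density equations of allele a gives
   (n1 + m - 1 + c)(n2 + m - 1 + d) = m^2 for the patch totals n_i, and allele A
   gives the same with c and d exchanged; as c < d, the totals coincide and
   n + m - 1 is the root A > -c of (A + c)(A + d) = m^2.  The hypothesis on m
   guarantees n > 0.  The densities then solve a nonsingular 2x2 linear system,
   the resulting mirror symmetry between the alleles makes the delta-equations a
   nonsingular linear system with delta^A = delta^a, and this equality makes F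
   vanish. *)

Section PositiveRoot.
Variables (R : rcfType) (c d m : R).
Hypotheses (lt_cd : c < d) (m_gt0 : 0 < m).

Definition proot := (Num.sqrt ((d - c) ^+ 2 + 4 * m ^+ 2) - c - d) / 2.

Lemma proot_mul : (proot + c) * (proot + d) = m ^+ 2.
Proof.
rewrite /proot; set S := Num.sqrt _.
have S2 : S ^+ 2 = (d - c) ^+ 2 + 4 * m ^+ 2.
  by rewrite sqr_sqrtr // addr_ge0 ?sqr_ge0 // mulr_ge0 ?sqr_ge0.
apply/eqP; rewrite -subr_eq0; apply/eqP.
have -> : ((S - c - d) / 2 + c) * ((S - c - d) / 2 + d) - m ^+ 2
        = (S ^+ 2 - ((d - c) ^+ 2 + 4 * m ^+ 2)) / 4 by field.
by rewrite S2 subrr mul0r.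
Qed.

Lemma proot_addc_gt0 : 0 < proot + c.
Proof.
have S_ge0 : 0 <= (proot + c) + (proot + d).
  have -> : (proot + c) + (proot + d) = Num.sqrt ((d - c) ^+ 2 + 4 * m ^+ 2).
    by rewrite /proot; field.
  exact: sqrtr_ge0.
have m2_gt0 : 0 < m ^+ 2 by rewrite exprn_gt0.
rewrite ltNge; apply/negP => le_x0.
have : (proot + c) * (proot + d) <= 0 by rewrite mulr_le0_ge0 //; lra.
by rewrite proot_mul leNgt m2_gt0.
Qed.

Lemma proot_addc_lt : proot + c < m.
Proof.
have Ac_gt0 := proot_addc_gt0; have cd := lt_cd.
rewrite ltNge; apply/negP => le_m.
have : 0 <= (proot + c - m) * (proot + d) by rewrite mulr_ge0 //; lra.
have : 0 < m * (proot + d - m) by rewrite mulr_gt0 //; lra.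
have := proot_mul; nra.
Qed.

Lemma lt_proot_addd : m < proot + d.
Proof.
have Ac_gt0 := proot_addc_gt0; have Ac_lt := proot_addc_lt; have cd := lt_cd.
rewrite ltNge; apply/negP => le_m.
have : 0 <= m * (m - (proot + d)) by rewrite mulr_ge0 //; lra.
have : 0 < (proot + d) * (m - (proot + c)) by rewrite mulr_gt0 //; lra.
have := proot_mul; nra.
Qed.

Lemma proot_unique A : 0 < A + c -> (A + c) * (A + d) = m ^+ 2 -> A = proot.
Proof.
move=> Ac_gt0 eA.
have pos : 0 < (A + c) + (proot + d).
  by have := proot_addc_gt0; have := lt_cd; lra.
have : (A - proot) * ((A + c) + (proot + d)) = 0.
  have -> : (A - proot) * ((A + c) + (proot + d))
          = (A + c) * (A + d) - (proot + c) * (proot + d) by ring.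
  by rewrite eA proot_mul subrr.
by move/eqP; rewrite mulf_eq0 (gt_eqF pos) orbF subr_eq0 => /eqP.
Qed.

Lemma lt_proot B : B + c <= 0 \/ (B + c) * (B + d) < m ^+ 2 -> B < proot.
Proof.
have Ac_gt0 := proot_addc_gt0; have cd := lt_cd.
case=> [Bc_le0 | lt_m2]; first lra.
rewrite ltNge; apply/negP => le_B.
have : (proot + c) * (proot + d) <= (B + c) * (B + d) by rewrite ler_pM //; lra.
by rewrite proot_mul leNgt lt_m2.
Qed.

End PositiveRoot.

Section DeltaSystem.
Variables (R : realFieldType) (g eta r s P : R).
Hypotheses (r_gt0 : 0 < r) (s_gt0 : 0 < s) (P_gtN1 : -1 < P) (P_lt1 : P < 1).

Definition delta_allele := 2 * g * (1 - eta * P) / ((r + s) - (r - s) * P).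
Definition delta_total := - 4 * g * eta + 2 * delta_allele * (r - s).

Lemma delta_system x y z :
  [/\ - x / 2 - 2 * g * eta + y / 2 * (r - s) - z / 2 * (s - r) = 0,
      2 * g + x / 2 * P - y * (r + s) + (z - y) / 4 = 0 &
      2 * g + x / 2 * P - z * (s + r) + (y - z) / 4 = 0] <->
  [/\ y = delta_allele, z = delta_allele & x = delta_total].
Proof.
have K_neq0 : (r + s) - (r - s) * P != 0.
  have -> : (r + s) - (r - s) * P = r * (1 - P) + s * (1 + P) by ring.
  by rewrite gt_eqF // addr_gt0 // mulr_gt0 //; move: P_gtN1 P_lt1; lra.
split=> [[e1 e2 e3] | [-> -> ->]]; last by split; rewrite /delta_total /delta_allele; field.
have zy : z = y.
  have pos : 0 < r + s + 1 / 2 by rewrite !addr_gt0 // divr_gt0.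
  have : (z - y) * (r + s + 1 / 2) = 0 by move: e2 e3; lra.
  by move/eqP; rewrite mulf_eq0 subr_eq0 (gt_eqF pos) orbF => /eqP.
subst z.
have hx : x = - 4 * g * eta + 2 * y * (r - s) by move: e1; lra.
have hy : y = delta_allele.
  rewrite /delta_allele -[y](mulfK K_neq0); congr (_ / _).
  by move: e2; rewrite hx; lra.
by split; rewrite // /delta_total hx hy.
Qed.
End DeltaSystem.

Section SymmetricPopulations.
Variables (R : realType) (g m eta u v : R) (Y : fastvar R).
Hypotheses (m_gt0 : 0 < m) (u_gt0 : 0 < u) (v_gt0 : 0 < v).
Hypotheses (Na1_u : Na1 Y = u) (Na2_v : Na2 Y = v) (NA1_v : NA1 Y = v) (NA2_u : NA2 Y = u).

Let uv_neq0 : u + v != 0. Proof. by rewrite gt_eqF // addr_gt0. Qed.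

Lemma p1_add_p2 : p1 Y + p2 Y = 1.
Proof. by rewrite /p1 /p2 Na1_u Na2_v NA1_v NA2_u [v + u]addrC; field. Qed.

Lemma p2_sub_p1 : p2 Y - p1 Y = (u - v) / (u + v).
Proof. by rewrite /p1 /p2 Na1_u Na2_v NA1_v NA2_u [v + u]addrC; field. Qed.

Local Notation P := ((u - v) / (u + v)).

Lemma G_delta_symmetric :
  [/\ G_dl g m eta Y = 0, G_dlA g m Y = 0 & G_dla g m Y = 0] <->
  [/\ dlA Y = delta_allele g eta (m * u / v) (m * v / u) P,
      dla Y = delta_allele g eta (m * u / v) (m * v / u) P &
      dl Y = delta_total g eta (m * u / v) (m * v / u) P].
Proof.
have uv_gt0 : 0 < u + v by rewrite addr_gt0.
have q1_sub_q2 : q1 Y - q2 Y = P by rewrite -p2_sub_p1 /q1 /q2; ring.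
have q1_add_q2 : q1 Y + q2 Y = 1 by rewrite /q1 /q2 -p1_add_p2; ring.
rewrite /G_dl /G_dlA /G_dla q1_sub_q2 q1_add_q2 p2_sub_p1 p1_add_p2 !mulr1.
rewrite /RA /SA /Ra /Sa Na1_u Na2_v NA1_v NA2_u.
apply: delta_system; rewrite ?mulr_gt0 ?invr_gt0 //.
- by rewrite ltr_pdivlMr //; move: u_gt0 v_gt0; lra.
- by rewrite ltr_pdivrMr //; move: u_gt0 v_gt0; lra.
Qed.

Lemma F_symmetric : dlA Y = dla Y -> F m Y = 0.
Proof.
rewrite /F p1_add_p2 /RA /SA /Ra /Sa Na1_u Na2_v NA1_v NA2_u => ->; ring.
Qed.

End SymmetricPopulations.

Lemma pair_balance (R : idomainType) (m s1 s2 x1 x2 : R) : x1 * x2 != 0 ->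
  m * x2 = s1 * x1 -> m * x1 = s2 * x2 -> s1 * s2 = m ^+ 2.
Proof. by move=> x_neq0 e1 e2; apply: (mulIf x_neq0); rewrite mulrACA -e1 -e2; ring. Qed.

Section Equilibrium.
Variables (R : realType) (g m eta : R).
Hypotheses (g_gt0 : 0 < g) (m_gt0 : 0 < m) (eta_gt0 : 0 < eta).

Definition sel_home := g * (1 - eta) ^+ 2.
Definition sel_away := g * (1 + eta) ^+ 2.

Local Notation root := (proot sel_home sel_away m).

Definition Ntot := root + 1 - m.
Definition Nhome := Ntot * (root + sel_away - m) / (sel_away - sel_home).
Definition Naway := Ntot * (m - root - sel_home) / (sel_away - sel_home).

Lemma sel_home_lt_away : sel_home < sel_away.
Proof.
rewrite -subr_gt0 (_ : _ - _ = 4 * g * eta); first by rewrite !mulr_gt0.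
by rewrite /sel_home /sel_away; ring.
Qed.

Let sel_neq : sel_away - sel_home != 0.
Proof. by rewrite gt_eqF // subr_gt0 sel_home_lt_away. Qed.

Let Ntot_root : Ntot + m - 1 = root.
Proof. by rewrite /Ntot; ring. Qed.

Lemma Nhome_add_Naway : Nhome + Naway = Ntot.
Proof. by rewrite /Nhome /Naway; field. Qed.

Lemma balance_home : m * Naway = (root + sel_home) * Nhome.
Proof.
apply/eqP; rewrite -subr_eq0; apply/eqP.
have -> : m * Naway - (root + sel_home) * Nhome
        = - (Ntot * ((root + sel_home) * (root + sel_away) - m ^+ 2) / (sel_away - sel_home)).
  by rewrite /Nhome /Naway; field.
by rewrite proot_mul ?sel_home_lt_away // subrr mulr0 mul0r oppr0.
Qed.

Lemma balance_away : m * Nhome = (root + sel_away) * Naway.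
Proof.
apply/eqP; rewrite -subr_eq0; apply/eqP.
have -> : m * Nhome - (root + sel_away) * Naway
        = Ntot * ((root + sel_home) * (root + sel_away) - m ^+ 2) / (sel_away - sel_home).
  by rewrite /Nhome /Naway; field.
by rewrite proot_mul ?sel_home_lt_away // subrr mulr0 mul0r.
Qed.

Lemma viability_condition :
  g * (eta ^+ 2 + 1) < 1 \/
  m < 2 * g ^+ 2 * eta ^+ 2 / (g * (eta ^+ 2 + 1) - 1) - g * (eta ^+ 2 + 1) + 1 ->
  m - 1 + sel_home <= 0 \/ (m - 1 + sel_home) * (m - 1 + sel_away) < m ^+ 2.
Proof.
set k := g * (eta ^+ 2 + 1).
have home_k : sel_home = k - 2 * g * eta by rewrite /sel_home /k; ring.
have away_k : sel_away = k + 2 * g * eta by rewrite /sel_away /k; ring.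
have ge_gt0 : 0 < g * eta by rewrite mulr_gt0.
have [k_lt1 | k_gt1 | k_eq1] := ltgtP k 1.
- move=> _; have [|mc_gt0] := lerP (m - 1 + sel_home) 0; [by left | right].
  have -> : (m - 1 + sel_home) * (m - 1 + sel_away)
          = m ^+ 2 - (m - (1 - sel_home)) * (2 - sel_home - sel_away) - (1 - sel_home) ^+ 2.
    by ring.
  have : 0 < (m - (1 - sel_home)) * (2 - sel_home - sel_away) by rewrite mulr_gt0 //; lra.
  have : 0 < (1 - sel_home) ^+ 2 by rewrite exprn_gt0 //; lra.
  lra.
- case=> [|lt_m]; first lra.
  right; have k1_gt0 : 0 < k - 1 by lra.
  have : (m + k - 1) * (k - 1) < 2 * g ^+ 2 * eta ^+ 2 by rewrite -ltr_pdivlMr //; lra.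
  have -> : (m - 1 + sel_home) * (m - 1 + sel_away)
          = m ^+ 2 + 2 * ((m + k - 1) * (k - 1)) - (k - 1) ^+ 2 - 4 * g ^+ 2 * eta ^+ 2.
    by rewrite home_k away_k; ring.
  have := sqr_ge0 (k - 1); lra.
- (* the second alternative reads m < 0, since x / 0 = 0 *)
  rewrite k_eq1 subrr invr0 mulr0 sub0r addNr => -[|m_lt0]; lra.
Qed.

Lemma Ntot_gt0 :
  g * (eta ^+ 2 + 1) < 1 \/
  m < 2 * g ^+ 2 * eta ^+ 2 / (g * (eta ^+ 2 + 1) - 1) - g * (eta ^+ 2 + 1) + 1 ->
  0 < Ntot.
Proof.
move=> /viability_condition /(lt_proot sel_home_lt_away m_gt0).
by rewrite /Ntot; lra.
Qed.

Lemma Nhome_gt0 : 0 < Ntot -> 0 < Nhome.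
Proof.
move=> Ntot_pos; rewrite /Nhome divr_gt0 ?subr_gt0 ?sel_home_lt_away // mulr_gt0 //.
by have := lt_proot_addd sel_home_lt_away m_gt0; lra.
Qed.

Lemma Naway_gt0 : 0 < Ntot -> 0 < Naway.
Proof.
move=> Ntot_pos; rewrite /Naway divr_gt0 ?subr_gt0 ?sel_home_lt_away // mulr_gt0 //.
by have := proot_addc_lt sel_home_lt_away m_gt0; lra.
Qed.

Lemma G_N_balance (Y : fastvar R) :
  [/\ G_Na1 g m eta Y 0 = 0, G_Na2 g m eta Y 0 = 0, G_NA1 g m eta Y 0 = 0
    & G_NA2 g m eta Y 0 = 0] <->
  [/\ m * Na2 Y = (NA1 Y + Na1 Y + m - 1 + sel_home) * Na1 Y,
      m * Na1 Y = (NA2 Y + Na2 Y + m - 1 + sel_away) * Na2 Y,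
      m * NA2 Y = (NA1 Y + Na1 Y + m - 1 + sel_away) * NA1 Y
    & m * NA1 Y = (NA2 Y + Na2 Y + m - 1 + sel_home) * NA2 Y].
Proof.
rewrite /G_Na1 /G_Na2 /G_NA1 /G_NA2 /sel_home /sel_away.
by split=> -[e1 e2 e3 e4]; split; lra.
Qed.

Lemma population_equilibrium (Y : fastvar R) :
  Na1 Y = Nhome -> Na2 Y = Naway -> NA1 Y = Naway -> NA2 Y = Nhome ->
  [/\ G_Na1 g m eta Y 0 = 0, G_Na2 g m eta Y 0 = 0, G_NA1 g m eta Y 0 = 0
    & G_NA2 g m eta Y 0 = 0].
Proof.
move=> e1 e2 e3 e4; apply/G_N_balance.
rewrite e1 e2 e3 e4 [Naway + Nhome]addrC Nhome_add_Naway Ntot_root.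
by split; rewrite ?balance_home ?balance_away.
Qed.

Lemma Ntot_unique (Y : fastvar R) : admissible Y ->
  [/\ G_Na1 g m eta Y 0 = 0, G_Na2 g m eta Y 0 = 0, G_NA1 g m eta Y 0 = 0
    & G_NA2 g m eta Y 0 = 0] ->
  NA1 Y + Na1 Y = Ntot /\ NA2 Y + Na2 Y = Ntot.
Proof.
case: Y => x1 x2 X1 X2 ? ? ? [/= x1_gt0 x2_gt0 X1_gt0 X2_gt0] /G_N_balance[/= e1 e2 e3 e4].
have home := pair_balance (mulf_neq0 (lt0r_neq0 x1_gt0) (lt0r_neq0 x2_gt0)) e1 e2.
have away := pair_balance (mulf_neq0 (lt0r_neq0 X1_gt0) (lt0r_neq0 X2_gt0)) e3 e4.
have n12 : X2 + x2 = X1 + x1.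
  have : (sel_away - sel_home) * ((X1 + x1) - (X2 + x2)) = 0 by move: home away; lra.
  by move/eqP; rewrite mulf_eq0 (negbTE sel_neq) subr_eq0 => /eqP ->.
have A_gt0 : 0 < X1 + x1 + m - 1 + sel_home.
  by rewrite -(pmulr_lgt0 _ x1_gt0) -e1 mulr_gt0.
rewrite n12 in home.
have := proot_unique sel_home_lt_away m_gt0 A_gt0 home.
by rewrite n12 /Ntot; split; lra.
Qed.

Lemma population_unique (Y : fastvar R) : admissible Y ->
  [/\ G_Na1 g m eta Y 0 = 0, G_Na2 g m eta Y 0 = 0, G_NA1 g m eta Y 0 = 0
    & G_NA2 g m eta Y 0 = 0] ->
  [/\ Na1 Y = Nhome, Na2 Y = Naway, NA1 Y = Naway & NA2 Y = Nhome].
Proof.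
move=> adm eqs; have [n1 n2] := Ntot_unique adm eqs.
case: Y adm eqs n1 n2 => x1 x2 X1 X2 ? ? ? _ /G_N_balance[/= e1 _ e3 _] n1 n2.
rewrite n1 Ntot_root in e1 e3.
have x1E : x1 = Ntot - X1 by lra.
have x2E : x2 = Ntot - X2 by lra.
have X1E : X1 = Naway.
  apply: (mulIf sel_neq); rewrite /Naway divfK //.
  by move: e1 e3; rewrite x1E x2E; lra.
have X2E : X2 = Nhome.
  by apply: (mulfI (lt0r_neq0 m_gt0)); rewrite e3 X1E balance_away.
by split; rewrite // ?x1E ?x2E ?X1E ?X2E -Nhome_add_Naway; ring.
Qed.

End Equilibrium.

Section StationaryPoint.
Variables (R : realType) (g m eta : R).
Hypotheses (g_gt0 : 0 < g) (m_gt0 : 0 < m) (eta_gt0 : 0 < eta).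

Local Notation u := (Nhome g m eta).
Local Notation v := (Naway g m eta).
Local Notation P := ((u - v) / (u + v)).

Definition Ystar : fastvar R :=
  FastVar u v v u (delta_total g eta (m * u / v) (m * v / u) P)
    (delta_allele g eta (m * u / v) (m * v / u) P)
    (delta_allele g eta (m * u / v) (m * v / u) P).

Hypothesis Ntot_pos : 0 < Ntot g m eta.

Let u_gt0 : 0 < u. Proof. exact: Nhome_gt0 Ntot_pos. Qed.
Let v_gt0 : 0 < v. Proof. exact: Naway_gt0 Ntot_pos. Qed.

Lemma Ystar_admissible : admissible Ystar.
Proof. by split. Qed.

Lemma Ystar_G_zero : G_zero g m eta Ystar 0.
Proof.
split; first exact: population_equilibrium.
by apply/(G_delta_symmetric g eta m_gt0 u_gt0 v_gt0).
Qed.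

Lemma G_zero_Ystar Y : admissible Y -> G_zero g m eta Y 0 -> Y = Ystar.
Proof.
move=> adm [/(population_unique g_gt0 m_gt0 eta_gt0 adm)[e1 e2 e3 e4] eqs].
have [eA ea e] := (G_delta_symmetric g eta m_gt0 u_gt0 v_gt0 e1 e2 e3 e4).1 eqs.
by case: Y e1 e2 e3 e4 eA ea e {adm eqs} => /= ? ? ? ? ? ? ? -> -> -> -> -> -> ->.
Qed.

Lemma F_Ystar : F m Ystar = 0.
Proof. exact: (F_symmetric m u_gt0 v_gt0). Qed.

End StationaryPoint.

Theorem mainTheorem8 (R : realType) (g m eta : R) :
  0 < g -> 0 < m -> 0 < eta ->
  (g * (eta ^+ 2 + 1) < 1 \/
   m < 2 * g ^+ 2 * eta ^+ 2 / (g * (eta ^+ 2 + 1) - 1) - g * (eta ^+ 2 + 1) + 1) ->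
  exists Ystar : fastvar R,
    [/\ admissible Ystar /\ G_zero g m eta Ystar 0,
        (forall Y : fastvar R, admissible Y -> G_zero g m eta Y 0 -> Y = Ystar),
        F m Ystar = 0,
        stationary g m eta Ystar 0 &
        [/\ Na1 Ystar = NA2 Ystar, Na2 Ystar = NA1 Ystar & dlA Ystar = dla Ystar]].
Proof.
move=> g_gt0 m_gt0 eta_gt0 /(Ntot_gt0 g_gt0 m_gt0 eta_gt0) Ntot_pos.
have Y_G0 := Ystar_G_zero g_gt0 m_gt0 eta_gt0 Ntot_pos.
have Y_F0 := F_Ystar g_gt0 m_gt0 eta_gt0 Ntot_pos.
exists (Ystar g m eta); split=> //.
- by split; first exact: Ystar_admissible.
- exact: G_zero_Ystar.
- by split; rewrite // Y_F0 mulr0 add0r.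
Qed.
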